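(* Suppose $k$ is a local field, $X$ a topological space, and $A$ a Banach $k$-algebra. Then every injective unital $k$-algebra homomorphism $\phi:C_{bd}(X,k)\to A$ whose image is closed in $A$ is continuous with respect to the supremum norm on $C_{bd}(X,k)$. In particular, if $V$ is a $k$-Banach space and $\rho:C_{bd}(X,k)\to\mathcal B_k(V)$ is an injective $k$-algebra homomorphism into the bounded operators with closed image, then $\rho$ is bounded.
   Context: A local field means a complete discretely valued field with finite residue field. $C_{bd}(X,k)$ is the $k$-algebra of bounded continuous functions $X\to k$ with the supremum norm. A Banach $k$-algebra is a unital $k$-algebra with a complete norm satisfying $\|f+g\|\le\max(\|f\|,\|g\|)$, $\|fg\|\le\|f\|\|g\|$, $\|af\|=|a|\|f\|$ for $a\in k$, and $\|1\|=1$. For a non-Archimedean $k$-Banach space $V$, $\mathcal B_k(V)$ is the Banach $k$-algebra of bounded $k$-linear operators on $V$ with operator norm. *)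

From HB Require Import structures.
From mathcomp Require Import all_boot all_order all_algebra.
From Stdlib Require Import Reals.
Set Implicit Arguments. Unset Strict Implicit. Unset Printing Implicit Defensive.
Import GRing.Theory.
Local Open Scope ring_scope.

Definition nonarch_abs (k : fieldType) (av : k -> R) : Prop :=
  [/\ (forall x, Rle R0 (av x)),
      (forall x, av x = R0 <-> x = 0),
      (forall x y, av (x * y) = Rmult (av x) (av y)) &
      (forall x y, Rle (av (x + y)) (Rmax (av x) (av y)))].

Definition cauchy_seq (T : Type) (d : T -> T -> R) (u : nat -> T) : Prop :=
  forall eps, Rlt R0 eps -> exists N : nat,
    forall m n, leq N m -> leq N n -> Rlt (d (u m) (u n)) eps.

Definition converges_to (T : Type) (d : T -> T -> R) (u : nat -> T) (l : T) : Prop :=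
  forall eps, Rlt R0 eps -> exists N : nat,
    forall n, leq N n -> Rlt (d (u n) l) eps.

Definition complete_metric (T : Type) (d : T -> T -> R) : Prop :=
  forall u, cauchy_seq d u -> exists l, converges_to d u l.

Definition local_field (k : fieldType) (av : k -> R) : Prop :=
  [/\ nonarch_abs av,
      complete_metric (fun x y : k => av (x - y)),
      (exists pi : k, ([/\ Rlt R0 (av pi), Rlt (av pi) R1 &
          (forall x : k, x != 0 -> exists n : Z, av x = powerRZ (av pi) n)])) &
      (* residue field {|x|<=1}/{|x|<1} is finite *)
      (exists s : seq k, forall x : k, Rle (av x) R1 ->
          exists2 a, a \in s & Rlt (av (x - a)) R1)].

Definition open_in_k (k : fieldType) (av : k -> R) (U : k -> Prop) : Prop :=
  forall y, U y -> exists r, Rlt R0 r /\ forall z, Rlt (av (z - y)) r -> U z.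

Definition is_topology (X : Type) (opn : (X -> Prop) -> Prop) : Prop :=
  [/\ opn (fun _ => True),
      opn (fun _ => False),
      (forall U V, opn U -> opn V -> opn (fun x => U x /\ V x)) &
      (forall F : (X -> Prop) -> Prop, (forall U, F U -> opn U) ->
          opn (fun x => exists U, F U /\ U x))].

Definition continuous_to_k (X : Type) (opn : (X -> Prop) -> Prop)
  (k : fieldType) (av : k -> R) (f : X -> k) : Prop :=
  forall U, open_in_k av U -> opn (fun x => U (f x)).

Definition bounded_fun (X : Type) (k : fieldType) (av : k -> R) (f : X -> k) : Prop :=
  exists M, forall x, Rle (av (f x)) M.

Definition Cbd (X : Type) (opn : (X -> Prop) -> Prop)
  (k : fieldType) (av : k -> R) (f : X -> k) : Prop :=
  continuous_to_k opn av f /\ bounded_fun av f.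

Definition supnorm_le (X : Type) (k : fieldType) (av : k -> R) (f : X -> k) (r : R) : Prop :=
  forall x, Rle (av (f x)) r.

Definition banach_algebra_norm (k : fieldType) (av : k -> R) (A : algType k)
  (nA : A -> R) : Prop :=
  (forall x, Rle R0 (nA x)) /\
  (forall x, nA x = R0 <-> x = 0) /\
  (forall x y, Rle (nA (x + y)) (Rmax (nA x) (nA y))) /\
  (forall x y, Rle (nA (x * y)) (Rmult (nA x) (nA y))) /\
  (forall (a : k) x, nA (a *: x) = Rmult (av a) (nA x)) /\
  nA 1 = R1 /\
  complete_metric (fun x y : A => nA (x - y)).

Definition closed_in_normed (T : zmodType) (n : T -> R) (S : T -> Prop) : Prop :=
  forall y, ~ S y -> exists r, Rlt R0 r /\ forall z, Rlt (n (z - y)) r -> ~ S z.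

Definition banach_space_norm (k : fieldType) (av : k -> R) (V : lmodType k)
  (nV : V -> R) : Prop :=
  [/\ (forall x, Rle R0 (nV x)),
      (forall x, nV x = R0 <-> x = 0),
      (forall x y, Rle (nV (x + y)) (Rmax (nV x) (nV y))),
      (forall (a : k) x, nV (a *: x) = Rmult (av a) (nV x)) &
      complete_metric (fun x y : V => nV (x - y))].

Definition bounded_op (k : fieldType) (V : lmodType k) (nV : V -> R) (T : V -> V) : Prop :=
  [/\ (forall x y, T (x + y) = T x + T y),
      (forall (a : k) x, T (a *: x) = a *: T x) &
      (exists C, forall v, Rle (nV (T v)) (Rmult C (nV v)))].

Definition opnorm_le (k : fieldType) (V : lmodType k) (nV : V -> R) (T : V -> V) (r : R) : Prop :=
  forall v, Rle (nV (T v)) (Rmult r (nV v)).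

Definition opnorm_lt (k : fieldType) (V : lmodType k) (nV : V -> R) (T : V -> V) (r : R) : Prop :=
  exists r', Rlt r' r /\ opnorm_le nV T r'.

(* The proof that phi is bounded has three ingredients.
   1. Spectral bound: |f x| <= ||phi f||.  If |f x| > ||phi f||, then g = f / f(x) has
      ||phi g|| < 1, the Neumann series sum_n g^n converges in the (closed) image of phi,
      and injectivity makes 1 - g invertible in C_bd(X,k), contradicting g x = 1.
   2. Baire: C_bd(X,k) is complete, so some closure of {g : ||phi g|| <= n} contains a ball;
      by additivity a ball B(0,r) is approximated by a bounded piece of the image.
   3. Open-mapping iteration: every y in B(0,r) is a pi-adic series sum_i pi^i g_i with
      ||phi g_i|| bounded; its image series converges to some phi h, and the spectral
      bound identifies y = h.  Rescaling by scalars of every size gives ||phi f|| <= K ||f||. *)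

From mathcomp Require Import all_boot all_algebra.
From Stdlib Require Import Reals Lra Classical.
From mathcomp Require Import boolp functions ring.
Import GRing.Theory.
Set Implicit Arguments. Unset Strict Implicit. Unset Printing Implicit Defensive.

Section RealFacts.
Local Open Scope R_scope.

Lemma pow_small (q : R) : 0 <= q -> q < 1 -> forall eps, 0 < eps ->
  exists N : nat, forall n : nat, leq N n -> q ^ n < eps.
Proof.
move=> q0 q1 eps he.
have [|N HN] := pow_lt_1_zero q _ eps he; first by rewrite Rabs_pos_eq //.
exists N => n /leP Hn; have := HN n Hn.
by rewrite Rabs_pos_eq //; apply: pow_le.
Qed.

Lemma pow_decr (q : R) : 0 <= q -> q <= 1 -> forall m n : nat, leq m n -> q ^ n <= q ^ m.
Proof.
move=> q0 q1 m n /leP; elim=> [|n' _ IH] /=; first lra.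
by have := pow_le q n' q0; nra.
Qed.

Lemma Rmax_le_compat (a b c d : R) : a <= c -> b <= d -> Rmax a b <= Rmax c d.
Proof.
move=> hac hbd; apply: Rmax_lub.
  exact: Rle_trans hac (Rmax_l _ _).
exact: Rle_trans hbd (Rmax_r _ _).
Qed.

Lemma Rdiv_mulK (a b : R) : b <> 0 -> (a / b) * b = a.
Proof. by move=> b0; rewrite /Rdiv Rmult_assoc Rinv_l ?Rmult_1_r. Qed.

Lemma Rmul_divK (a b : R) : b <> 0 -> b * (a / b) = a.
Proof. by move=> b0; rewrite Rmult_comm; apply: Rdiv_mulK. Qed.

Lemma le_of_eps (a b : R) : (forall eta, 0 < eta -> a <= b + eta) -> a <= b.
Proof.
move=> H; apply: Rnot_lt_le => ab.
by have := H ((a - b)/2) ltac:(lra); lra.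
Qed.

Lemma le_of_max_eps (a b : R) : 0 <= b -> (forall eta, 0 < eta -> a <= Rmax b eta) -> a <= b.
Proof.
move=> b0 H; apply: Rnot_lt_le => ab.
by have := H ((a + b)/2) ltac:(lra); rewrite Rmax_right; lra.
Qed.

Lemma Rmax_mulr (r s t : R) : 0 <= t -> Rmax (r * t) (s * t) <= Rmax r s * t.
Proof.
move=> t0; apply: Rmax_lub; apply: Rmult_le_compat_r => //; [apply: Rmax_l | apply: Rmax_r].
Qed.

Lemma le0_of_scaled_eps (a c : R) : 0 <= c -> (forall eps, 0 < eps -> a <= eps * c) -> a <= 0.
Proof.
move=> c0 h; apply: le_of_eps => eta heta; rewrite Rplus_0_l.
have he : 0 < eta / (c + 1) by apply: Rdiv_lt_0_compat; lra.
apply: Rle_trans (h _ he) _.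
have := Rdiv_mulK eta (b := c + 1) ltac:(lra); nra.
Qed.

Lemma pow_window (q s : R) : 0 < q -> q < 1 -> 0 < s -> s <= 1 ->
  exists n : nat, s <= q ^ n /\ q ^ n.+1 < s.
Proof.
move=> q0 q1 s0 s1.
have hex : exists n, `[< q ^ n.+1 < s >].
  have [n hn] := pow_small (Rlt_le _ _ q0) q1 s0.
  by exists n; apply/asboolP; apply: hn.
case: (ex_minnP hex) => n /asboolP hn hmin; exists n; split => //.
case: n hn hmin => [|n] hn hmin; first by rewrite /=; lra.
apply: Rnot_lt_le => hlt.
by have := hmin n (introT (asboolP _) hlt); rewrite ltnn.
Qed.

End RealFacts.

Local Open Scope ring_scope.

Section AbsoluteValue.
Variables (k : fieldType) (av : k -> R).
Hypothesis hna : nonarch_abs av.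

Lemma av_ge0 x : Rle R0 (av x). Proof. by case: hna. Qed.
Lemma av_eq0 x : av x = R0 <-> x = 0. Proof. by case: hna. Qed.
Lemma avM x y : av (x * y) = Rmult (av x) (av y). Proof. by case: hna. Qed.
Lemma avD x y : Rle (av (x + y)) (Rmax (av x) (av y)). Proof. by case: hna. Qed.
Lemma av0 : av 0 = R0. Proof. exact/av_eq0. Qed.

Lemma av_gt0 x : x != 0 -> Rlt R0 (av x).
Proof.
move=> x0; case: (Rle_lt_or_eq_dec _ _ (av_ge0 x)) => // /esym /av_eq0 ex.
by rewrite ex eqxx in x0.
Qed.

Lemma av1 : av 1 = R1.
Proof.
have h := avM 1 1; rewrite mulr1 in h.
have ha : Rlt R0 (av 1) by apply: av_gt0; exact: oner_neq0.
move: h ha; generalize (av 1) => a h ha.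
by apply: (Rmult_eq_reg_l a); [rewrite Rmult_1_r | ]; lra.
Qed.

Lemma avN x : av (- x) = av x.
Proof.
have h1 : av (-1) = R1.
  have h := avM (-1) (-1); rewrite mulrNN mulr1 av1 in h.
  have := av_ge0 (-1); move: h; generalize (av (-1)) => a; nra.
by rewrite -mulN1r avM h1 Rmult_1_l.
Qed.

Lemma av_subC x y : av (x - y) = av (y - x).
Proof. by rewrite -avN opprB. Qed.

Lemma avB x y : Rle (av (x - y)) (Rmax (av x) (av y)).
Proof. by rewrite -(avN y); apply: avD. Qed.

Lemma av_tri x y z : Rle (av (x - z)) (Rmax (av (x - y)) (av (y - z))).
Proof. by have := avD (x - y) (y - z); rewrite addrA subrK. Qed.

Lemma av_lt_max a b r : Rlt (av a) r -> Rlt (av b) r -> Rlt (av (a + b)) r.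
Proof. by move=> ha hb; apply: Rle_lt_trans (avD a b) _; apply: Rmax_lub_lt. Qed.

Lemma avV x : x != 0 -> av (x^-1) = Rinv (av x).
Proof.
move=> x0; have h := avM x (x^-1); rewrite mulfV // av1 in h.
have := av_gt0 x0; move: h; generalize (av x) (av x^-1) => a b h ha.
apply: (Rmult_eq_reg_l a); last lra.
by rewrite -h Rinv_r; lra.
Qed.

Lemma avX x n : av (x ^+ n) = pow (av x) n.
Proof. by elim: n => [|n IH]; rewrite ?expr0 ?av1 // exprS avM IH. Qed.

End AbsoluteValue.

Lemma scalar_window (k : fieldType) (av : k -> R) (hna : nonarch_abs av) (pi : k) :
  Rlt R0 (av pi) -> Rlt (av pi) R1 -> forall s, Rlt R0 s ->
  exists a : k, [/\ a != 0, Rle s (av a) & Rle (av a) (Rdiv s (av pi))].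
Proof.
move=> q0 q1 s s0.
have pi0 : pi != 0 by apply/eqP => e; move: q0; rewrite e (av0 hna); lra.
have pin0 n : pi ^+ n != 0 by apply: expf_neq0.
case: (Rle_lt_dec s R1) => hs1.
  have [n [hn hn1]] := pow_window q0 q1 s0 hs1.
  exists (pi ^+ n); split; rewrite ?(avX hna) //.
  move: hn1 => /= hn1; apply: (Rmult_le_reg_l (av pi)) => //.
  rewrite Rmul_divK; lra.
have [|n [hn hn1]] := pow_window q0 q1 (Rdiv_lt_0_compat _ _ q0 s0).
  apply: Rlt_le; apply: (Rmult_lt_reg_r s) => //.
  rewrite Rdiv_mulK; lra.
exists (pi ^+ n)^-1; rewrite (avV hna (pin0 n)) (avX hna).
move: hn hn1; rewrite /= => hn hn1.
set q := av pi in q0 q1 hn hn1 *; set p := pow q n in hn hn1 *.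
have hp : Rlt R0 p by apply: pow_lt.
have hsq : Rlt R0 (Rdiv s q) by apply: Rdiv_lt_0_compat.
split; first by rewrite invr_eq0.
- apply: (Rmult_le_reg_r p) => //; rewrite Rinv_l; last lra.
  apply: (Rmult_le_reg_l q) => //.
  have := Rmult_lt_compat_l s _ _ s0 hn1.
  rewrite Rmul_divK; lra.
- apply: (Rmult_le_reg_r p) => //; rewrite Rinv_l; last lra.
  have := Rmult_le_compat_l _ _ _ (Rlt_le _ _ hsq) hn.
  have -> : Rmult (Rdiv s q) (Rdiv q s) = R1.
    by rewrite /Rdiv -Rmult_assoc (Rmult_assoc s) Rinv_l ?Rmult_1_r ?Rinv_r //; lra.
  lra.
Qed.

Section BoundedContinuous.
Variables (k : fieldType) (av : k -> R).
Hypothesis hna : nonarch_abs av.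
Variables (X : Type) (opn : (X -> Prop) -> Prop).
Hypothesis hX : is_topology opn.
Local Notation C := (Cbd opn av).

Lemma opn_local (W : X -> Prop) :
  (forall x, W x -> exists U, [/\ opn U, U x & forall y, U y -> W y]) -> opn W.
Proof.
move=> h; case: hX => _ _ _ hunion.
pose F := fun U : X -> Prop => opn U /\ forall y, U y -> W y.
have -> : W = (fun x => exists U, F U /\ U x).
  apply: funext => x; apply: propext; split.
    by move=> /h [U [hU hUx hUW]]; exists U.
  by case=> U [[_ hUW] /hUW].
by apply: hunion => U [].
Qed.

Lemma cont_of_local (f : X -> k) :
  (forall x r, Rlt R0 r -> exists U, [/\ opn U, U x &
      forall y, U y -> Rlt (av (f y - f x)) r]) -> continuous_to_k opn av f.
Proof.
move=> h U hU; apply: opn_local => x hx.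
have [r [r0 hr]] := hU _ hx.
have [V [hV hVx hVr]] := h x r r0.
by exists V; split => // y /hVr; apply: hr.
Qed.

Lemma cont_ball (f : X -> k) : continuous_to_k opn av f -> forall c r,
  opn (fun x => Rlt (av (f x - c)) r).
Proof.
move=> hf c r; apply: (hf (fun z => Rlt (av (z - c)) r)) => y hy; exists r; split.
  exact: Rle_lt_trans (av_ge0 hna _) hy.
by move=> z hz; apply: Rle_lt_trans (av_tri hna z y c) _; apply: Rmax_lub_lt.
Qed.

Lemma cont_ball2 (f g : X -> k) (x : X) (r : R) : C f -> C g -> Rlt R0 r ->
  exists U, [/\ opn U, U x & forall y, U y ->
    Rlt (av (f y - f x)) r /\ Rlt (av (g y - g x)) r].
Proof.
move=> [hf _] [hg _] r0; exists (fun y => Rlt (av (f y - f x)) r /\ Rlt (av (g y - g x)) r).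
split => //; last by rewrite !subrr (av0 hna).
by case: hX => _ _ hI _; apply: hI; apply: cont_ball.
Qed.

Lemma Cbd_const c : C (fun _ => c).
Proof.
split; last by exists (av c) => x; apply: Rle_refl.
apply: cont_of_local => x r r0; exists (fun _ => True); split => //.
  by case: hX.
by move=> y _; rewrite subrr (av0 hna).
Qed.

Lemma Cbd_add f g : C f -> C g -> C (fun x => f x + g x).
Proof.
move=> hf hg; split.
  apply: cont_of_local => x r r0.
  have [U [hU hUx hUr]] := cont_ball2 x hf hg r0.
  exists U; split => // y /hUr [h1 h2].
  by rewrite opprD addrACA; apply: (av_lt_max hna).
case: hf hg => _ [Mf bf] [_ [Mg bg]]; exists (Rmax Mf Mg) => x.
apply: Rle_trans (avD hna _ _) _; apply: Rmax_le_compat; [apply: bf | apply: bg].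
Qed.

Lemma Cbd_mul f g : C f -> C g -> C (fun x => f x * g x).
Proof.
move=> hf hg; case: (hf) (hg) => _ [Mf bf] [_ [Mg bg]]; split; last first.
  exists (Rmult (Rmax Mf 0) (Rmax Mg 0)) => x; rewrite (avM hna).
  apply: Rmult_le_compat; try apply: av_ge0 => //.
    exact: Rle_trans (bf x) (Rmax_l _ _).
  exact: Rle_trans (bg x) (Rmax_l _ _).
apply: cont_of_local => x r r0.
have hF := av_ge0 hna (f x); have hG := av_ge0 hna (g x).
(* s is small enough that s * (|f x| + |g x| + 2) <= r, and s <= 1 *)
pose s := Rmin 1 (Rdiv r (av (f x) + av (g x) + 2)).
have hs0 : Rlt 0 s by apply: Rmin_pos; [lra | apply: Rdiv_lt_0_compat; lra].
have hs1 : Rle s 1 by apply: Rmin_l.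
have hs2 : Rle (Rmult s (av (f x) + av (g x) + 2)) r.
  rewrite -(@Rdiv_mulK r (av (f x) + av (g x) + 2)); last lra.
  by apply: Rmult_le_compat_r; [lra | apply: Rmin_r].
have [U [hU hUx hUs]] := cont_ball2 x hf hg hs0.
exists U; split => // y /hUs [h1 h2].
have hgy : Rle (av (g y)) (av (g x) + 1).
  have -> : g y = (g y - g x) + g x by rewrite subrK.
  by apply: Rle_trans (avD hna _ _) _; apply: Rmax_lub; lra.
have -> : f y * g y - f x * g x = (f y - f x) * g y + f x * (g y - g x).
  by rewrite mulrBl mulrBr addrA subrK.
have hdf := av_ge0 hna (f y - f x); have hdg := av_ge0 hna (g y - g x).
by apply: (av_lt_max hna); rewrite (avM hna); nra.
Qed.

Lemma Cbd_scal (a : k) f : C f -> C (fun x => a * f x).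
Proof. by move=> hf; apply: Cbd_mul => //; apply: Cbd_const. Qed.

Lemma Cbd_sub f g : C f -> C g -> C (fun x => f x - g x).
Proof.
move=> hf hg; have := Cbd_add hf (Cbd_scal (-1) hg).
by under eq_fun do rewrite mulN1r.
Qed.

Lemma supnorm_tri (f g h : X -> k) r s :
  supnorm_le av (fun x => f x - g x) r -> supnorm_le av (fun x => g x - h x) s ->
  supnorm_le av (fun x => f x - h x) (Rmax r s).
Proof.
move=> h1 h2 x; apply: Rle_trans (av_tri hna _ (g x) _) _.
exact: Rmax_le_compat.
Qed.

Lemma supnorm_sym (f g : X -> k) r :
  supnorm_le av (fun x => f x - g x) r -> supnorm_le av (fun x => g x - f x) r.
Proof. by move=> h x; rewrite (av_subC hna); apply: h. Qed.

Lemma supnorm_mono (f : X -> k) r s : supnorm_le av f r -> Rle r s -> supnorm_le av f s.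
Proof. by move=> h hrs x; apply: Rle_trans (h x) hrs. Qed.

Hypothesis hcomp : complete_metric (fun x y : k => av (x - y)).

Lemma Cbd_complete (u : nat -> X -> k) :
  (forall n, C (u n)) ->
  (forall eps, Rlt R0 eps -> exists N : nat, forall m n, leq N m -> leq N n ->
     supnorm_le av (fun x => u m x - u n x) eps) ->
  exists l, C l /\ forall eps, Rlt R0 eps -> exists N : nat,
     forall n, leq N n -> supnorm_le av (fun x => u n x - l x) eps.
Proof.
move=> hu hC.
have hl x : exists l, converges_to (fun a b : k => av (a - b)) (fun n => u n x) l.
  apply: hcomp => eps he; have [N hN] := hC (Rdiv eps 2) ltac:(lra).
  by exists N => m n hm hn; apply: Rle_lt_trans (hN m n hm hn x) _; lra.
have [l hl'] := choice hl.
have hunif eps : Rlt R0 eps -> exists N : nat,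
     forall n, leq N n -> supnorm_le av (fun x => u n x - l x) eps.
  move=> he; have [N hN] := hC eps he; exists N => n hn x.
  apply: le_of_max_eps => [|eta heta]; first lra.
  have [N' hN'] := hl' x eta heta.
  apply: Rle_trans (av_tri hna _ (u (maxn N N') x) _) _.
  apply: Rmax_le_compat; first by apply: hN; rewrite ?leq_maxl.
  by apply: Rlt_le; apply: hN'; rewrite leq_maxr.
exists l; split => //; split.
  apply: cont_of_local => x r r0.
  have [M hM] := hunif (Rdiv r 2) ltac:(lra).
  have [U [hU hUx hUr]] := cont_ball2 x (hu M) (hu M) r0.
  exists U; split => // y /hUr [hy _].
  have -> : l y - l x = (l y - u M y) + ((u M y - u M x) + (u M x - l x)) by ring.
  apply: (av_lt_max hna); last apply: (av_lt_max hna) => //.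
    by rewrite (av_subC hna); apply: Rle_lt_trans (hM M (leqnn M) y) _; lra.
  by apply: Rle_lt_trans (hM M (leqnn M) x) _; lra.
have [N hN] := hunif R1 Rlt_0_1; case: (hu N) => _ [M hM].
exists (Rmax M R1) => x; rewrite -[l x](subKr (u N x)).
exact: Rle_trans (avB hna _ _) (Rmax_le_compat (hM x) (hN N (leqnn N) x)).
Qed.

Lemma nested_balls (y : nat -> X -> k) (r : nat -> R) :
  (forall n, C (y n)) -> (forall n, Rlt R0 (r n)) ->
  (forall n, Rle (r n.+1) (Rdiv (r n) 2)) ->
  (forall n, supnorm_le av (fun x => y n.+1 x - y n x) (r n)) ->
  exists l, C l /\ forall n, supnorm_le av (fun x => l x - y n x) (r n).
Proof.
move=> hy hr hhalf hstep.
have hdec n j : Rle (r (n + j)%nat) (r n).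
  elim: j => [|j IH]; first by rewrite addn0; apply: Rle_refl.
  by rewrite addnS; have := hhalf (n + j)%nat; have := hr (n + j)%nat; lra.
have hgeom n : Rle (r n) (Rmult (r 0%nat) (pow (Rdiv 1 2) n)).
  elim: n => [|n IH] /=; first lra.
  by have := hhalf n; lra.
have hfar n m : leq n m -> supnorm_le av (fun x => y m x - y n x) (r n).
  move=> /subnKC <-; elim: (m - n)%nat => [|j IH].
    by move=> x; rewrite addn0 subrr (av0 hna); apply: Rlt_le.
  rewrite addnS; apply: supnorm_mono (supnorm_tri (hstep _) IH) _.
  by apply: Rmax_lub; [apply: hdec | apply: Rle_refl].
have [l [hl hlim]] : exists l, C l /\ forall eps, Rlt R0 eps -> exists N : nat,
    forall n, leq N n -> supnorm_le av (fun x => y n x - l x) eps.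
  apply: Cbd_complete => // eps he.
  have hr0 := hr 0%nat.
  have [N hN] := @pow_small (Rdiv 1 2) ltac:(lra) ltac:(lra) (Rdiv eps (r 0%nat))
    (Rdiv_lt_0_compat _ _ he hr0).
  exists N => m n hm hn.
  apply: supnorm_mono (supnorm_tri (hfar N m hm) (supnorm_sym (hfar N n hn))) _.
  rewrite Rmax_left; last by apply: Rle_refl.
  apply: Rle_trans (hgeom N) _; apply: Rlt_le.
  rewrite -(@Rmul_divK eps (r 0%nat)); last lra.
  by apply: Rmult_lt_compat_l => //; apply: hN.
exists l; split => // n x; apply: le_of_max_eps => [|eta heta]; first exact: Rlt_le.
have [M hM] := hlim eta heta.
apply: supnorm_mono (supnorm_tri (supnorm_sym (hM _ (leq_maxl M n)))
  (hfar n _ (leq_maxr M n))) _ x.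
by rewrite Rmax_comm; apply: Rle_refl.
Qed.

Lemma baire_Cbd (P : nat -> (X -> k) -> Prop) :
  (forall f, C f -> exists n, P n f) ->
  exists n y0 r, [/\ C y0, Rlt R0 r &
    forall y, C y -> supnorm_le av (fun x => y x - y0 x) r ->
    forall eps, Rlt R0 eps ->
    exists g, [/\ C g, P n g & supnorm_le av (fun x => y x - g x) eps]].
Proof.
move=> hcover; apply: NNPP => hno.
(* Otherwise every ball B(y0, r) contains a ball B(y, eps) disjoint from P n. *)
have hole n y0 r : C y0 -> Rlt R0 r -> exists y eps,
    [/\ C y, supnorm_le av (fun x => y x - y0 x) r, Rlt R0 eps &
      forall g, C g -> P n g -> ~ supnorm_le av (fun x => y x - g x) eps].
  move=> hy0 hr; apply: NNPP => hn; apply: hno; exists n, y0, r; split => // y hy hyr eps he.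
  apply: NNPP => hg; apply: hn; exists y, eps; split => // g hgC hPg hyg.
  by apply: hg; exists g.
(* Choose such a ball inside each (ball, n), with at least halved radius. *)
have step (np : nat * ((X -> k) * R)) : exists p : (X -> k) * R,
    C np.2.1 -> Rlt R0 np.2.2 ->
    [/\ C p.1, Rlt R0 p.2, Rle p.2 (Rdiv np.2.2 2),
      supnorm_le av (fun x => p.1 x - np.2.1 x) np.2.2 &
      forall g, C g -> P np.1 g -> ~ supnorm_le av (fun x => p.1 x - g x) p.2].
  case: np => n [y0 r] /=; case: (pselect (C y0 /\ Rlt R0 r)) => [[hy0 hr]|hbad]; last first.
    by exists (y0, r) => hy0 hr; case: hbad.
  have [y [eps [hy hyr he hP]]] := hole n y0 (Rdiv r 2) hy0 ltac:(lra).
  exists (y, Rmin eps (Rdiv r 2)) => _ _ /=; split => //.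
  - by apply: Rmin_pos; lra.
  - exact: Rmin_r.
  - by apply: supnorm_mono hyr _; lra.
  - move=> g hg hPg hyg; apply: (hP g hg hPg).
    by apply: supnorm_mono hyg _; apply: Rmin_l.
have [st hst] := choice step.
pose s := fix s n := if n is m.+1 then st (m, s m) else ((fun _ : X => 0 : k), R1).
have hinv n : C (s n).1 /\ Rlt R0 (s n).2.
  elim: n => [|n [hC hr]]; first by split; [apply: Cbd_const | apply: Rlt_0_1].
  by case: (hst (n, s n) hC hr).
have hnext n := hst (n, s n) (hinv n).1 (hinv n).2.
have [l [hl hball]] : exists l, C l /\
    forall n, supnorm_le av (fun x => l x - (s n).1 x) (s n).2.
  apply: nested_balls => n; [exact: (hinv n).1 | exact: (hinv n).2 | |].
  - by case: (hnext n).
  - by case: (hnext n).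
have [n hn] := hcover l hl.
by case: (hnext n) => _ _ _ _ /(_ l hl hn); apply; apply: supnorm_sym; apply: (hball n.+1).
Qed.

End BoundedContinuous.

(* A complete separated ultrametric norm on an additive group A, presented by the
   relation N a r meaning ||a|| <= r. This presentation lets the operator norm of
   B_k(V) be used without constructing it as a supremum. *)
Record ultranorm (A : zmodType) (N : A -> R -> Prop) : Prop := {
  un_ge0 : forall {a r}, N a r -> Rle R0 r;
  un_mono : forall {a r s}, N a r -> Rle r s -> N a s;
  un_add : forall {a b r s}, N a r -> N b s -> N (a + b) (Rmax r s);
  un_opp : forall {a r}, N a r -> N (- a) r;
  un_zero : N 0 R0;
  un_sep : forall a, (forall r, Rlt R0 r -> N a r) -> a = 0;
  un_complete : forall u : nat -> A,
    (forall eps, Rlt R0 eps -> exists M : nat,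
       forall m n, leq M m -> leq M n -> N (u m - u n) eps) ->
    exists l, forall eps, Rlt R0 eps -> exists M : nat,
       forall n, leq M n -> N (u n - l) eps }.

Section Ultranorm.
Variables (A : zmodType) (N : A -> R -> Prop).
Hypothesis hN : ultranorm N.

Lemma un_sub a b r s : N a r -> N b s -> N (a - b) (Rmax r s).
Proof. by move=> ha hb; apply: (un_add hN) ha (un_opp hN hb). Qed.

Lemma geometric_cauchy (u : nat -> A) (c q : R) :
  Rle R0 c -> Rle R0 q -> Rlt q R1 ->
  (forall n, N (u n.+1 - u n) (Rmult c (pow q n))) ->
  exists l, forall eps, Rlt R0 eps -> exists M : nat,
    forall n, leq M n -> N (u n - l) eps.
Proof.
move=> c0 q0 q1 hu.
have cq0 n : Rle R0 (Rmult c (pow q n)) by apply: Rmult_le_pos => //; apply: pow_le.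
have far n m : leq n m -> N (u m - u n) (Rmult c (pow q n)).
  move=> /subnKC <-; elim: (m - n)%nat => [|j IH].
    by rewrite addn0 subrr; apply: (un_mono hN) (un_zero hN) _.
  have -> : u (n + j.+1)%nat - u n = (u (n + j).+1 - u (n + j)%nat) + (u (n + j)%nat - u n).
    by rewrite addnS addrA subrK.
  apply: (un_mono hN) ((un_add hN) (hu _) IH) _; apply: Rmax_lub; last exact: Rle_refl.
  apply: Rmult_le_compat_l => //; apply: pow_decr; rewrite ?leq_addr //; lra.
apply: (un_complete hN) => eps he.
have [M hM] := pow_small q0 q1 (Rdiv_lt_0_compat eps (c + 1) he ltac:(lra)).
exists M => m n hm hn.
have -> : u m - u n = (u m - u M) - (u n - u M) by rewrite opprB addrA subrK.
apply: (un_mono hN) (un_sub (far M m hm) (far M n hn)) _.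
rewrite Rmax_left; last exact: Rle_refl.
have := hM M (leqnn M); have := pow_le q M q0; move: (pow q M) => p hp hpe.
have : Rlt (Rmult (c + 1) p) eps.
  rewrite -(@Rmul_divK eps (c + 1)); last lra.
  by apply: Rmult_lt_compat_l => //; lra.
nra.
Qed.

End Ultranorm.

Lemma geometric_sum_identity (T : comPzRingType) (a : T) n :
  (1 - a) * (1 + \sum_(i < n) a ^+ i.+1) = 1 - a ^+ n.+1.
Proof.
elim: n => [|n IH]; first by rewrite big_ord0 addr0 mulr1 expr1.
by rewrite big_ord_recr /= addrA mulrDr IH !exprS; ring.
Qed.

Lemma neumann_defect (T : comPzRingType) (a b : T) n :
  (1 - a) * (1 + b) - 1 = (1 - a) * (b - \sum_(i < n) a ^+ i.+1) - a ^+ n.+1.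
Proof. by rewrite -[a ^+ n.+1](subKr 1) -geometric_sum_identity; ring. Qed.

Section Representation.
Variables (k : fieldType) (av : k -> R).
Hypothesis hna : nonarch_abs av.
Variables (X : Type) (opn : (X -> Prop) -> Prop).
Hypothesis hX : is_topology opn.
Local Notation C := (Cbd opn av).
Variables (A : zmodType) (N : A -> R -> Prop).
Hypothesis hN : ultranorm N.

Variable phi : (X -> k) -> A.
Hypothesis phiD : forall f g, C f -> C g -> phi (fun x => f x + g x) = phi f + phi g.
Hypothesis phiM : forall f g r s, C f -> C g -> N (phi f) r -> N (phi g) s ->
  N (phi (fun x => f x * g x)) (Rmult r s).
Hypothesis phiZ : forall (a : k) f r, C f -> N (phi f) r ->
  N (phi (fun x => a * f x)) (Rmult (av a) r).
Hypothesis phiB : forall f, C f -> exists r, N (phi f) r.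
Hypothesis phiI : forall f g, C f -> C g -> phi f = phi g -> f = g.
Hypothesis phiC : forall l, (forall eps, Rlt R0 eps -> exists f, C f /\ N (phi f - l) eps) ->
  exists h, C h /\ phi h = l.

Lemma phi0 : phi (fun _ => 0) = 0.
Proof.
have := phiD (Cbd_const hna hX 0) (Cbd_const hna hX 0).
rewrite (_ : (fun _ => 0 + 0) = fun _ => 0); last by apply: funext => x; rewrite addr0.
by move=> h; apply: (addrI (phi (fun _ => 0))); rewrite addr0 -h.
Qed.

Lemma phi_sub f g : C f -> C g -> phi (fun x => f x - g x) = phi f - phi g.
Proof.
move=> hf hg; apply/eqP; rewrite eq_sym subr_eq -(phiD (Cbd_sub hna hX hf hg) hg).
by apply/eqP; congr phi; apply: funext => x; rewrite subrK.
Qed.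

Definition psum (w : nat -> X -> k) (n : nat) : X -> k := fun x => \sum_(i < n) w i x.

Lemma psum0 w : psum w 0 = fun _ => 0.
Proof. by apply: funext => x; rewrite /psum big_ord0. Qed.

Lemma psumS w n : psum w n.+1 = fun x => psum w n x + w n x.
Proof. by apply: funext => x; rewrite /psum big_ord_recr. Qed.

Lemma Cbd_psum w n : (forall i, C (w i)) -> C (psum w n).
Proof.
move=> hw; elim: n => [|n IH]; first by rewrite psum0; apply: (Cbd_const hna hX).
by rewrite psumS; apply: (Cbd_add hna hX).
Qed.

Lemma series_in_image (w : nat -> X -> k) (c q : R) :
  (forall n, C (w n)) -> Rle R0 c -> Rle R0 q -> Rlt q R1 ->
  (forall n, N (phi (w n)) (Rmult c (pow q n))) ->
  exists h, [/\ C h, N (phi h) (Rmax c R1) &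
    forall eps, Rlt R0 eps -> exists M : nat,
      forall n, leq M n -> N (phi (psum w n) - phi h) eps].
Proof.
move=> hw c0 q0 q1 hwN.
have phiS n : phi (psum w n.+1) = phi (psum w n) + phi (w n).
  by rewrite psumS phiD //; apply: Cbd_psum.
have [l hl] : exists l, forall eps, Rlt R0 eps -> exists M : nat,
    forall n, leq M n -> N (phi (psum w n) - l) eps.
  by apply: (geometric_cauchy hN c0 q0 q1) => n; rewrite phiS addrAC subrr add0r.
have [h [hh hhl]] : exists h, C h /\ phi h = l.
  apply: phiC => eps he; have [M hM] := hl eps he.
  by exists (psum w M); split; [apply: Cbd_psum | apply: hM].
exists h; split => //; last by rewrite hhl.
have hpsum n : N (phi (psum w n)) c.
  elim: n => [|n IH]; first by rewrite psum0 phi0; apply: (un_mono hN) (un_zero hN) _.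
  rewrite phiS; apply: (un_mono hN) ((un_add hN) IH (hwN n)) _.
  apply: Rmax_lub; first exact: Rle_refl.
  have := pow_decr q0 (Rlt_le _ _ q1) (leq0n n); rewrite /= => hq.
  by have := Rmult_le_compat_l _ _ _ c0 hq; rewrite Rmult_1_r.
have [M hM] := hl R1 Rlt_0_1.
rewrite hhl -[l](subKr (phi (psum w M))).
apply: (un_mono hN) (un_sub hN (hpsum M) (hM M (leqnn M))) _; exact: Rle_refl.
Qed.

Lemma phi_powers g q : C g -> N (phi g) q -> forall n,
  C (fun x => g x ^+ n.+1) /\ N (phi (fun x => g x ^+ n.+1)) (Rmult q (pow q n)).
Proof.
move=> hg hgq; elim=> [|n [IHC IHN]].
  by rewrite Rmult_1_r; under eq_fun do rewrite expr1.
under [fun x => g x ^+ n.+2]eq_fun do rewrite exprS.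
by split; [apply: (Cbd_mul hna hX) | apply: phiM].
Qed.

Lemma neumann_inverse g q : C g -> Rle R0 q -> Rlt q R1 -> N (phi g) q ->
  exists h, C h /\ forall x, (1 - g x) * (1 + h x) = 1.
Proof.
move=> hg q0 q1 hgq.
pose w n := fun x => g x ^+ n.+1.
have [hw hwN] : (forall n, C (w n)) /\ forall n, N (phi (w n)) (Rmult q (pow q n)).
  by split=> n; case: (phi_powers hg hgq n).
have [h [hh _ hconv]] := series_in_image hw q0 q0 q1 hwN.
pose e := fun x => 1 - g x.
have he : C e by apply: (Cbd_sub hna hX) => //; apply: (Cbd_const hna hX).
have hF : C (fun x => e x * (1 + h x)).
  by apply: (Cbd_mul hna hX) => //; apply: (Cbd_add hna hX) => //; apply: (Cbd_const hna hX).
exists h; split => // x.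
suff hF1 : (fun x => e x * (1 + h x)) = (fun _ => 1) by move/(congr1 (fun F => F x)): hF1.
apply: phiI => //; first exact: (Cbd_const hna hX).
apply/eqP; rewrite -subr_eq0; apply/eqP; apply: (un_sep hN) => eps heps.
(* phi (e (1 + h)) - phi 1 = phi (e (h - S_n)) - phi (g^(n+1)), and both terms are small *)
have [Be hBe] := phiB he.
have Be0 := un_ge0 hN hBe.
pose del := Rdiv eps (Be + 1).
have hdel : Rlt R0 del by apply: Rdiv_lt_0_compat; lra.
have [M1 hM1] := hconv del hdel.
have [M2 hM2] := pow_small q0 q1 heps.
pose n := maxn M1 M2.
have hsub : C (fun y => h y - psum w n y) by apply: (Cbd_sub hna hX) => //; apply: Cbd_psum.
rewrite -phi_sub //; last exact: (Cbd_const hna hX).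
rewrite (_ : (fun y => _) = fun y => e y * (h y - psum w n y) - w n y); last first.
  by apply: funext => y; apply: neumann_defect.
rewrite phi_sub; [ | exact: (Cbd_mul hna hX) | exact: hw].
have hd : N (phi (fun y => h y - psum w n y)) del.
  rewrite phi_sub //; last exact: Cbd_psum.
  by rewrite -opprB; apply: (un_opp hN); apply: hM1; apply: leq_maxl.
have hqn : Rlt (pow q n) eps by apply: hM2; apply: leq_maxr.
apply: (un_mono hN) (un_sub hN (phiM he hsub hBe hd) (hwN n)) _.
have hdel_eps : Rmult (Be + 1) del = eps by apply: Rmul_divK; lra.
have hp := pow_le q n q0; apply: Rmax_lub; nra.
Qed.

(* The spectral bound: |f x| <= ||phi f||, since for |lambda| > ||phi f|| the function
   lambda - f is invertible in C_bd(X,k) and hence cannot vanish at x. *)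
Lemma spectral_bound f r x : C f -> N (phi f) r -> Rle (av (f x)) r.
Proof.
move=> hf hfr; apply: Rnot_lt_le => hlt.
have r0 := un_ge0 hN hfr.
have lam0 : f x != 0 by apply/eqP => e; move: hlt; rewrite e (av0 hna); lra.
have hlam := av_gt0 hna lam0.
pose g := fun y => (f x)^-1 * f y.
have hg : C g by apply: (Cbd_scal hna hX).
have hq0 : Rle R0 (Rmult (av (f x)^-1) r) by apply: Rmult_le_pos => //; apply: av_ge0.
have hq1 : Rlt (Rmult (av (f x)^-1) r) R1.
  rewrite (avV hna lam0); apply: (Rmult_lt_reg_l (av (f x))) => //.
  by rewrite -Rmult_assoc Rinv_r; lra.
have [h [_ hinv]] := neumann_inverse hg hq0 hq1 (phiZ _ hf hfr).
by move: (hinv x); rewrite /g mulVf // subrr mul0r => /eqP; rewrite eq_sym oner_eq0.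
Qed.

Lemma uniform_limit_preimage (f : nat -> X -> k) (y h : X -> k) :
  (forall n, C (f n)) -> C h ->
  (forall eps, Rlt R0 eps -> exists M : nat, forall n, leq M n -> N (phi (f n) - phi h) eps) ->
  (forall eps, Rlt R0 eps -> exists M : nat, forall n, leq M n ->
     supnorm_le av (fun x => y x - f n x) eps) ->
  y = h.
Proof.
move=> hf hh hphi hunif; apply: funext => x; apply/eqP; rewrite -subr_eq0; apply/eqP.
apply/(av_eq0 hna); apply: Rle_antisym; last exact: av_ge0.
apply: le_of_eps => eta heta; rewrite Rplus_0_l.
have [M1 hM1] := hphi eta heta; have [M2 hM2] := hunif eta heta.
pose n := maxn M1 M2.
apply: Rle_trans (av_tri hna _ (f n x) _) _; apply: Rmax_lub.
  by apply: hM2; apply: leq_maxr.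
apply: (spectral_bound (f := fun x => f n x - h x)); first exact: (Cbd_sub hna hX).
by rewrite phi_sub //; apply: hM1; apply: leq_maxl.
Qed.


Hypothesis hcomp : complete_metric (fun x y : k => av (x - y)).

(* By Baire's theorem the sets {g : ||phi g|| <= n} cannot all be nowhere dense in
   C_bd(X,k); by additivity of phi, the closure of one of them contains a ball around 0. *)
Lemma dense_bounded_near_zero : exists B r, [/\ Rle R0 B, Rlt R0 r &
  forall y, C y -> supnorm_le av y r -> forall eps, Rlt R0 eps ->
  exists g, [/\ C g, N (phi g) B & supnorm_le av (fun x => y x - g x) eps]].
Proof.
have cover f : C f -> exists n, N (phi f) (INR n).
  move=> hf; have [B hB] := phiB hf; have [n hn] := INR_archimed R1 B Rlt_0_1.
  by exists n; apply: (un_mono hN) hB _; lra.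
have [n [y0 [r [hy0 hr hP]]]] := baire_Cbd hna hX hcomp cover.
exists (INR n), r; split => //; first exact: pos_INR.
move=> y hy hyr eps heps.
have hy0y : C (fun x => y0 x + y x) by apply: (Cbd_add hna hX).
have hy0yr : supnorm_le av (fun x => y0 x + y x - y0 x) r.
  by move=> x; rewrite addrAC subrr add0r; apply: hyr.
have [g1 [hg1 hN1 hS1]] := hP _ hy0y hy0yr eps heps.
have [g2 [hg2 hN2 hS2]] : exists g, [/\ C g, N (phi g) (INR n) &
    supnorm_le av (fun x => y0 x - g x) eps].
  by apply: hP => // x; rewrite subrr (av0 hna); apply: Rlt_le.
exists (fun x => g1 x - g2 x); split; first exact: (Cbd_sub hna hX).
  by rewrite phi_sub // -(Rmax_left (INR n) (INR n)); [apply: un_sub | apply: Rle_refl].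
move=> x; rewrite -(Rmax_left eps eps); last exact: Rle_refl.
have -> : y x - (g1 x - g2 x) = (y0 x + y x - g1 x) - (y0 x - g2 x) by ring.
exact: Rle_trans (avB hna _ _) (Rmax_le_compat (hS1 x) (hS2 x)).
Qed.

Variable pi : k.
Hypotheses (hpi0 : Rlt R0 (av pi)) (hpi1 : Rlt (av pi) R1).

Lemma pi_adic_expansion B r y : Rlt R0 r ->
  (forall z, C z -> supnorm_le av z r ->
     exists g, [/\ C g, N (phi g) B & supnorm_le av (fun x => z x - g x) (Rmult r (av pi))]) ->
  C y -> supnorm_le av y r ->
  exists gs : nat -> X -> k, [/\ forall n, C (gs n), forall n, N (phi (gs n)) B &
    forall n, supnorm_le av (fun x => y x - psum (fun i x => pi ^+ i * gs i x) n x)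
                         (Rmult (pow (av pi) n) r)].
Proof.
move=> hr happ hy hyr.
have pi0 : pi != 0 by apply/eqP => e; move: hpi0; rewrite e (av0 hna); lra.
(* one step: z = g + pi z' with z' again in the ball *)
have step z : exists p : (X -> k) * (X -> k), C z -> supnorm_le av z r ->
    [/\ C p.1, N (phi p.1) B, C p.2, supnorm_le av p.2 r &
      forall x, z x = p.1 x + pi * p.2 x].
  case: (pselect (C z /\ supnorm_le av z r)) => [[hz hzr]|hbad]; last first.
    by exists (z, z) => hz hzr; case: hbad.
  have [g [hg hgB hgz]] := happ z hz hzr.
  exists (g, fun x => pi^-1 * (z x - g x)) => _ _ /=; split => //.
  - by apply: (Cbd_scal hna hX); apply: (Cbd_sub hna hX).
  - move=> x; rewrite (avM hna) (avV hna pi0).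
    apply: (Rmult_le_reg_l (av pi)) => //; rewrite -Rmult_assoc Rinv_r; last lra.
    by rewrite Rmult_1_l Rmult_comm; apply: hgz.
  - by move=> x; rewrite mulrA mulfV // mul1r addrC subrK.
have [st hst] := choice step.
pose zs := fix zs n := if n is m.+1 then (st (zs m)).2 else y.
pose gs n := (st (zs n)).1.
have hinv n : C (zs n) /\ supnorm_le av (zs n) r.
  by elim: n => [|n [hC hB]] //; case: (hst (zs n) hC hB).
have hnext n := hst (zs n) (hinv n).1 (hinv n).2.
exists gs; split => [n|n|n]; try by case: (hnext n).
have hexp m x : y x = psum (fun i x => pi ^+ i * gs i x) m x + pi ^+ m * zs m x.
  elim: m => [|m IH]; first by rewrite psum0 expr0 mul1r add0r.
  rewrite psumS exprS /= {1}IH; case: (hnext m) => _ _ _ _ ->; rewrite /gs; ring.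
move=> x; rewrite {1}(hexp n x) addrAC subrr add0r (avM hna) (avX hna).
apply: Rmult_le_compat_l; first by apply: pow_le; lra.
exact: (hinv n).2.
Qed.

Lemma small_ball_bound : exists r M, [/\ Rlt R0 r, Rle R0 M &
  forall y, C y -> supnorm_le av y r -> N (phi y) M].
Proof.
have [B [r [hB hr happ]]] := dense_bounded_near_zero.
exists r, (Rmax B R1); split => //; first by apply: Rle_trans (Rmax_r _ _); lra.
move=> y hy hyr.
have hrpi : Rlt R0 (Rmult r (av pi)) by apply: Rmult_lt_0_compat.
have [gs [hgs hgsB hexp]] := pi_adic_expansion hr (fun z hz hzr => happ z hz hzr _ hrpi) hy hyr.
pose w i := fun x => pi ^+ i * gs i x.
have hw i : C (w i) by apply: (Cbd_scal hna hX).
have hwN i : N (phi (w i)) (Rmult B (pow (av pi) i)).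
  by rewrite Rmult_comm -(avX hna); apply: phiZ.
have [h [hh hhB hconv]] := series_in_image hw hB (Rlt_le _ _ hpi0) hpi1 hwN.
suff -> : y = h by [].
apply: (uniform_limit_preimage (f := psum w)) => // [n|eps heps]; first exact: Cbd_psum.
have [M hM] := pow_small (Rlt_le _ _ hpi0) hpi1 (Rdiv_lt_0_compat eps r heps hr).
exists M => n hn; apply: supnorm_mono (hexp n) _; apply: Rlt_le.
rewrite -(@Rdiv_mulK eps r); last lra.
by apply: Rmult_lt_compat_r => //; apply: hM.
Qed.

Lemma phi_bounded : exists K, Rle R0 K /\ forall f t, C f -> Rle R0 t ->
  supnorm_le av f t -> N (phi f) (Rmult K t).
Proof.
have [r [M [hr hM hb]]] := small_ball_bound.
exists (Rmult M (Rinv (Rmult r (av pi)))); split.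
  apply: Rmult_le_pos => //; apply: Rlt_le; apply: Rinv_0_lt_compat.
  exact: Rmult_lt_0_compat.
move=> f t hf ht hft; case: (Rle_lt_or_eq_dec _ _ ht) => [tpos|t0]; last first.
  subst t.
  have -> : f = fun _ => 0.
    apply: funext => x; apply/(av_eq0 hna); apply: Rle_antisym; [exact: hft | exact: av_ge0].
  by rewrite phi0 Rmult_0_r; apply: (un_zero hN).
have [a [a0 ha1 ha2]] := scalar_window hna hpi0 hpi1 (Rdiv_lt_0_compat t r tpos hr).
have ha := av_gt0 hna a0.
have hf' : C (fun x => a^-1 * f x) by apply: (Cbd_scal hna hX).
have hf'r : supnorm_le av (fun x => a^-1 * f x) r.
  move=> x; rewrite (avM hna) (avV hna a0).
  apply: (Rmult_le_reg_l (av a)) => //; rewrite -Rmult_assoc Rinv_r ?Rmult_1_l; last lra.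
  apply: Rle_trans (hft x) _.
  have := Rmult_le_compat_r r _ _ (Rlt_le _ _ hr) ha1; rewrite Rdiv_mulK //; lra.
have := phiZ a hf' (hb _ hf' hf'r).
rewrite (_ : (fun x => a * (a^-1 * f x)) = f); last first.
  by apply: funext => x; rewrite mulrA mulfV // mul1r.
move=> hfa; apply: (un_mono hN) hfa _.
have := Rmult_le_compat_r M _ _ hM ha2.
rewrite /Rdiv Rinv_mult; lra.
Qed.

End Representation.

Section BanachSpace.
Variables (k : fieldType) (av : k -> R).
Hypothesis hna : nonarch_abs av.
Variables (V : lmodType k) (nV : V -> R).
Hypothesis hV : banach_space_norm av nV.

Lemma banach_space_ultranorm : ultranorm (fun (v : V) r => Rle (nV v) r).
Proof.
case: hV => n0 nz nD nZ ncomp; split.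
- by move=> v r; apply: Rle_trans (n0 v).
- by move=> v r s; apply: Rle_trans.
- by move=> v w r s hv hw; apply: Rle_trans (nD v w) (Rmax_le_compat hv hw).
- move=> v r; rewrite -scaleN1r nZ avN // av1 // Rmult_1_l //.
- by have [_ ->] := nz 0; [apply: Rle_refl | ].
- move=> v h; apply/nz; apply: Rle_antisym; last exact: n0.
  by apply: le_of_eps => eta he; rewrite Rplus_0_l; apply: h.
- move=> u hu; have [l hl] : exists l, converges_to (fun x y : V => nV (x - y)) u l.
    apply: ncomp => eps he; have [M hM] := hu (Rdiv eps 2) ltac:(lra).
    by exists M => m n hm hn; apply: Rle_lt_trans (hM m n hm hn) _; lra.
  exists l => eps he; have [M hM] := hl eps he.
  by exists M => n hn; apply: Rlt_le; apply: hM.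
Qed.

Local Notation hVN := banach_space_ultranorm.

Lemma vec_zero_of_small v c : Rle R0 c ->
  (forall eps, Rlt R0 eps -> Rle (nV v) (Rmult eps c)) -> v = 0.
Proof.
move=> c0 h; apply: (un_sep hVN) => eps he.
by apply: Rle_trans (le0_of_scaled_eps c0 h) (Rlt_le _ _ he).
Qed.

Definition opnorm_bound (T : V -> V) (r : R) : Prop := Rle R0 r /\ opnorm_le nV T r.

Lemma operator_ultranorm : ultranorm opnorm_bound.
Proof.
case: hV => n0 _ nD _ _; split.
- by move=> T r [].
- move=> T r s [r0 hT] hrs; split=> [|v]; first lra.
  by apply: Rle_trans (hT v) _; apply: Rmult_le_compat_r.
- move=> S T r s [r0 hS] [s0 hT]; split=> [|v]; first exact: Rle_trans r0 (Rmax_l _ _).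
  apply: Rle_trans (nD _ _) _; apply: Rle_trans (Rmax_mulr _ _ (n0 v)).
  exact: Rmax_le_compat.
- by move=> T r [r0 hT]; split => // v; apply: (un_opp hVN); apply: hT.
- split=> [|v]; first exact: Rle_refl.
  by rewrite Rmult_0_l; apply: (un_zero hVN).
- move=> T hT; apply: funext => v; apply: (vec_zero_of_small (n0 v)) => eps he.
  by case: (hT eps he) => _; apply.
- move=> u hu.
  have hpt v : exists l, forall eps, Rlt R0 eps -> exists M : nat,
      forall n, leq M n -> Rle (nV (u n v - l)) eps.
    apply: (un_complete hVN) => eps he.
    have hpos : Rlt R0 (Rdiv eps (nV v + 1)) by apply: Rdiv_lt_0_compat; have := n0 v; lra.
    have [M hM] := hu _ hpos; exists M => m n hm hn.
    case: (hM m n hm hn) => _ /(_ v) hb; apply: Rle_trans hb _.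
    have := Rdiv_mulK eps (b := nV v + 1) ltac:(have := n0 v; lra); have := n0 v; nra.
  have [l hl] := choice hpt.
  exists l => eps he; have [M hM] := hu eps he; exists M => n hn; split => [|v]; first lra.
  change (Rle (nV (u n v - l v)) (Rmult eps (nV v))).
  apply: le_of_max_eps => [|eta heta]; first by apply: Rmult_le_pos; [lra | apply: n0].
  have [M' hM'] := hl v eta heta; pose m := maxn M M'.
  have -> : u n v - l v = (u n v - u m v) + (u m v - l v) by rewrite addrA subrK.
  apply: Rle_trans (nD _ _) (Rmax_le_compat _ _).
    by case: (hM n m hn (leq_maxl _ _)) => _; apply.
  by apply: hM'; apply: leq_maxr.
Qed.

Lemma opnorm_bound_comp (S T : V -> V) r s : opnorm_bound S r -> opnorm_bound T s ->
  opnorm_bound (fun v => S (T v)) (Rmult r s).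
Proof.
move=> [r0 hS] [s0 hT]; split=> [|v]; first exact: Rmult_le_pos.
by apply: Rle_trans (hS _) _; rewrite Rmult_assoc; apply: Rmult_le_compat_l.
Qed.

Lemma opnorm_bound_scale (a : k) (T : V -> V) r : opnorm_bound T r ->
  opnorm_bound (fun v => a *: T v) (Rmult (av a) r).
Proof.
case: hV => _ _ _ nZ _ [r0 hT]; have ha := av_ge0 hna a.
split=> [|v]; first exact: Rmult_le_pos.
by rewrite nZ Rmult_assoc; apply: Rmult_le_compat_l.
Qed.

Lemma bounded_op_bound (T : V -> V) : bounded_op nV T -> exists r, opnorm_bound T r.
Proof.
case: hV => n0 _ _ _ _ [_ _ [c hc]]; exists (Rmax c R0); split=> [|v]; first exact: Rmax_r.
by apply: Rle_trans (hc v) _; apply: Rmult_le_compat_r; [apply: n0 | apply: Rmax_l].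
Qed.

Definition op_approximable (l : V -> V) : Prop :=
  forall eps, Rlt R0 eps -> exists S, bounded_op nV S /\ opnorm_bound (S - l) eps.

Lemma opnorm_defect eps (S l : V -> V) (z : V) : opnorm_bound (S - l) eps ->
  Rle (nV (S z - l z)) (Rmult eps (nV z)) /\ Rle (nV (l z - S z)) (Rmult eps (nV z)).
Proof.
case=> _ hS; split; first exact: hS.
by rewrite -opprB; apply: (un_opp hVN); apply: hS.
Qed.

Lemma approximable_additive (l : V -> V) : op_approximable l ->
  forall x y, l (x + y) = l x + l y.
Proof.
case: hV => n0 _ nD _ _ happ x y; apply/eqP; rewrite -subr_eq0; apply/eqP.
have hx := n0 x; have hy := n0 y; have hxy := n0 (x + y).
apply: (vec_zero_of_small (c := nV (x + y) + (nV x + nV y))) => [|eps he]; first lra.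
have [S [[SD _ _] hS]] := happ eps he.
have inner : (S x - l x) + (S y - l y) = S (x + y) - (l x + l y).
  by rewrite addrACA -opprD SD.
have -> : l (x + y) - (l x + l y) = (l (x + y) - S (x + y)) + ((S x - l x) + (S y - l y)).
  by rewrite inner addrA subrK.
have [_ h1] := opnorm_defect (x + y) hS.
have [h2 _] := opnorm_defect x hS; have [h3 _] := opnorm_defect y hS.
have e0 : Rle R0 eps by lra.
have := Rmult_le_pos _ _ e0 hx; have := Rmult_le_pos _ _ e0 hy.
have := Rmult_le_pos _ _ e0 hxy => pxy py px.
apply: Rle_trans (nD _ _) _; apply: Rmax_lub; first lra.
by apply: Rle_trans (nD _ _) _; apply: Rmax_lub; lra.
Qed.

Lemma approximable_scalable (l : V -> V) : op_approximable l ->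
  forall (a : k) x, l (a *: x) = a *: l x.
Proof.
case: hV => n0 _ nD nZ _ happ a x; apply/eqP; rewrite -subr_eq0; apply/eqP.
have ha := av_ge0 hna a; have hx := n0 x; have hax := n0 (a *: x).
apply: (vec_zero_of_small (c := nV (a *: x) + Rmult (av a) (nV x))) => [|eps he].
  by have := Rmult_le_pos _ _ ha hx; lra.
have [S [[_ SZ _] hS]] := happ eps he.
have -> : l (a *: x) - a *: l x = (l (a *: x) - S (a *: x)) + a *: (S x - l x).
  by rewrite scalerBr -SZ addrA subrK.
have [_ h1] := opnorm_defect (a *: x) hS; have [h2 _] := opnorm_defect x hS.
have p1 : Rle R0 (Rmult eps (nV (a *: x))) by apply: Rmult_le_pos; lra.
have p2 : Rle R0 (Rmult eps (Rmult (av a) (nV x))).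
  by apply: Rmult_le_pos; [lra | apply: Rmult_le_pos].
have p3 : Rle (Rmult (av a) (nV (S x - l x))) (Rmult (av a) (Rmult eps (nV x))).
  exact: Rmult_le_compat_l.
apply: Rle_trans (nD _ _) _; rewrite nZ.
apply: Rle_trans (Rmax_le_compat h1 p3) _.
by apply: Rmax_lub; lra.
Qed.

Lemma approximable_bounded (l : V -> V) : op_approximable l ->
  exists c, forall v, Rle (nV (l v)) (Rmult c (nV v)).
Proof.
case: hV => n0 _ _ _ _ happ; have [S [[_ _ [c hc]] hS]] := happ R1 Rlt_0_1.
exists (Rmax c R1) => v; rewrite -[l v](subKr (S v)).
apply: Rle_trans (un_sub hVN (Rle_refl _) (Rle_refl _)) _.
exact: Rle_trans (Rmax_le_compat (hc v) (proj1 (opnorm_defect v hS))) (Rmax_mulr _ _ (n0 v)).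
Qed.

Lemma bounded_op_limit (l : V -> V) : op_approximable l -> bounded_op nV l.
Proof.
move=> happ; split; [exact: approximable_additive | exact: approximable_scalable |].
exact: approximable_bounded.
Qed.

Lemma closed_ops_limit (P : (V -> V) -> Prop) :
  (forall T, P T -> bounded_op nV T) ->
  (forall T, bounded_op nV T -> ~ P T -> exists r, Rlt R0 r /\ forall S, bounded_op nV S ->
     opnorm_lt nV (fun v => S v - T v) r -> ~ P S) ->
  forall l, (forall eps, Rlt R0 eps -> exists S, P S /\ opnorm_bound (S - l) eps) -> P l.
Proof.
move=> hPb hcl l hl.
have hlb : bounded_op nV l.
  apply: bounded_op_limit => eps he; have [S [hS hSl]] := hl eps he.
  by exists S; split => //; apply: hPb.
apply: NNPP => hno; have [r [hr hball]] := hcl l hlb hno.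
have [S [hS [_ hSl]]] := hl (Rdiv r 2) ltac:(lra).
by apply: (hball S (hPb S hS)) => //; exists (Rdiv r 2); split => //; lra.
Qed.

End BanachSpace.

Lemma closed_in_normed_limit (T : zmodType) (n : T -> R) (S : T -> Prop) l :
  closed_in_normed n S ->
  (forall eps, Rlt R0 eps -> exists a, S a /\ Rle (n (a - l)) eps) -> S l.
Proof.
move=> hcl hl; apply: NNPP => hno; have [r [hr hball]] := hcl l hno.
have [a [ha hal]] := hl (Rdiv r 2) ltac:(lra).
by apply: (hball a) => //; apply: Rle_lt_trans hal _; lra.
Qed.

Lemma banach_algebra_space (k : fieldType) (av : k -> R) (A : algType k) (nA : A -> R) :
  banach_algebra_norm av nA -> banach_space_norm av nA.
Proof. by case=> n0 [nz [nD [_ [nZ [_ ncomp]]]]]; split. Qed.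

Lemma injective_hom_continuous (k : fieldType) (av : k -> R) (hk : local_field av)
  (X : Type) (opn : (X -> Prop) -> Prop) (hX : is_topology opn)
  (A : algType k) (nA : A -> R) (phi : (X -> k) -> A) :
  banach_algebra_norm av nA ->
  (forall f g, Cbd opn av f -> Cbd opn av g -> phi (fun x => f x + g x) = phi f + phi g) ->
  (forall f g, Cbd opn av f -> Cbd opn av g -> phi (fun x => f x * g x) = phi f * phi g) ->
  (forall (a : k) f, Cbd opn av f -> phi (fun x => a * f x) = a *: phi f) ->
  (forall f g, Cbd opn av f -> Cbd opn av g -> phi f = phi g -> f = g) ->
  closed_in_normed nA (fun y => exists f, Cbd opn av f /\ phi f = y) ->
  forall f, Cbd opn av f -> forall eps, Rlt R0 eps ->
    exists delta, Rlt R0 delta /\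
      forall g, Cbd opn av g -> supnorm_le av (fun x => f x - g x) delta ->
        Rle (nA (phi f - phi g)) eps.
Proof.
case: hk => hna hcomp [pi [hpi0 hpi1 _]] _.
move=> hA phiD phiM phiZ phiI hcl.
have hN := banach_space_ultranorm hna (banach_algebra_space hA).
case: hA => n0 [_ [_ [nM [nZ _]]]].
have phiM' f g r s : Cbd opn av f -> Cbd opn av g -> Rle (nA (phi f)) r -> Rle (nA (phi g)) s ->
    Rle (nA (phi (fun x => f x * g x))) (Rmult r s).
  move=> hf hg hr hs; rewrite phiM //; apply: Rle_trans (nM _ _) _.
  by apply: Rmult_le_compat => //; apply: n0.
have phiZ' (a : k) f r : Cbd opn av f -> Rle (nA (phi f)) r ->
    Rle (nA (phi (fun x => a * f x))) (Rmult (av a) r).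
  by move=> hf hr; rewrite phiZ // nZ; apply: Rmult_le_compat_l => //; apply: av_ge0.
have phiB f : Cbd opn av f -> exists r, Rle (nA (phi f)) r.
  by move=> _; exists (nA (phi f)); apply: Rle_refl.
have phiC l : (forall eps, Rlt R0 eps -> exists f, Cbd opn av f /\ Rle (nA (phi f - l)) eps) ->
    exists h, Cbd opn av h /\ phi h = l.
  move=> hl; apply: (closed_in_normed_limit hcl) => eps he.
  by have [f [hf hfl]] := hl eps he; exists (phi f); split => //; exists f.
have [K [K0 hK]] := phi_bounded hna hX hN phiD phiM' phiZ' phiB phiI phiC hcomp hpi0 hpi1.
move=> f hf eps heps; exists (Rdiv eps (K + 1)); split; first by apply: Rdiv_lt_0_compat; lra.
move=> g hg hfg; rewrite -(phi_sub hna hX phiD hf hg).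
have hd : Rle R0 (Rdiv eps (K + 1)) by apply: Rlt_le; apply: Rdiv_lt_0_compat; lra.
apply: Rle_trans (hK _ _ (Cbd_sub hna hX hf hg) hd hfg) _.
have := Rdiv_mulK eps (b := K + 1) ltac:(lra); nra.
Qed.

Lemma bounded_representation (k : fieldType) (av : k -> R) (hk : local_field av)
  (X : Type) (opn : (X -> Prop) -> Prop) (hX : is_topology opn)
  (V : lmodType k) (nV : V -> R) (rho : (X -> k) -> V -> V) :
  banach_space_norm av nV ->
  (forall f, Cbd opn av f -> bounded_op nV (rho f)) ->
  (forall f g, Cbd opn av f -> Cbd opn av g ->
     rho (fun x => f x + g x) = (fun v => rho f v + rho g v)) ->
  (forall f g, Cbd opn av f -> Cbd opn av g ->
     rho (fun x => f x * g x) = (fun v => rho f (rho g v))) ->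
  (forall (a : k) f, Cbd opn av f -> rho (fun x => a * f x) = (fun v => a *: rho f v)) ->
  rho (fun _ => 1) = (fun v => v) ->
  (forall f g, Cbd opn av f -> Cbd opn av g -> rho f = rho g -> f = g) ->
  (forall T, bounded_op nV T -> ~ (exists f, Cbd opn av f /\ rho f = T) ->
     exists r, Rlt R0 r /\ forall S, bounded_op nV S ->
       opnorm_lt nV (fun v => S v - T v) r -> ~ (exists f, Cbd opn av f /\ rho f = S)) ->
  exists C, forall f, Cbd opn av f -> forall r, supnorm_le av f r ->
    opnorm_le nV (rho f) (Rmult C r).
Proof.
case: hk => hna hcomp [pi [hpi0 hpi1 _]] _.
move=> hV hbd rhoD rhoM rhoZ rho1 rhoI hcl.
have hN := operator_ultranorm hna hV.
have phiD f g : Cbd opn av f -> Cbd opn av g -> rho (fun x => f x + g x) = rho f + rho g.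
  exact: rhoD.
have phiM f g r s : Cbd opn av f -> Cbd opn av g -> opnorm_bound nV (rho f) r ->
    opnorm_bound nV (rho g) s -> opnorm_bound nV (rho (fun x => f x * g x)) (Rmult r s).
  by move=> hf hg hr hs; rewrite rhoM //; apply: opnorm_bound_comp.
have phiZ (a : k) f r : Cbd opn av f -> opnorm_bound nV (rho f) r ->
    opnorm_bound nV (rho (fun x => a * f x)) (Rmult (av a) r).
  by move=> hf hr; rewrite rhoZ //; apply: (opnorm_bound_scale hna hV).
have phiB f : Cbd opn av f -> exists r, opnorm_bound nV (rho f) r.
  by move=> hf; apply: (bounded_op_bound hV); apply: hbd.
have phiC l : (forall eps, Rlt R0 eps -> exists f, Cbd opn av f /\ opnorm_bound nV (rho f - l) eps) ->
    exists h, Cbd opn av h /\ rho h = l.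
  move=> hl; apply: (closed_ops_limit hna hV _ hcl) => [T [f [hf <-]]|eps he].
    exact: hbd.
  by have [f [hf hfl]] := hl eps he; exists (rho f); split => //; exists f.
have [K [K0 hK]] := phi_bounded hna hX hN phiD phiM phiZ phiB rhoI phiC hcomp hpi0 hpi1.
exists K => f hf t ht; case: (Rle_lt_dec R0 t) => [t0|tneg].
  by case: (hK f t hf t0 ht).
(* a negative sup-bound forces X to be empty; then 1 = 0 in C_bd(X,k), so V = 0 *)
have hV0 (v : V) : v = 0.
  have e10 : (fun _ : X => 1 : k) = (fun _ => 0).
    by apply: funext => x; have := ht x; have := av_ge0 hna (f x); lra.
  by have := congr1 (fun T : V -> V => T v) rho1; rewrite /= e10 (phi0 hna hX phiD) => <-.
have nV0 : nV 0 = R0 by case: hV => _ nz _ _ _; apply/nz.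
by move=> v; rewrite (hV0 (rho f v)) (hV0 v) nV0 Rmult_0_r; apply: Rle_refl.
Qed.

Unset Implicit Arguments.

Theorem mainTheorem14 (k : fieldType) (av : k -> R) (hk : local_field av)
  (X : Type) (opn : (X -> Prop) -> Prop) (hX : is_topology opn) :
  (* general statement *)
  (forall (A : algType k) (nA : A -> R) (phi : (X -> k) -> A),
     banach_algebra_norm av nA ->
     (forall f g, Cbd opn av f -> Cbd opn av g -> phi (fun x => f x + g x) = phi f + phi g) ->
     (forall f g, Cbd opn av f -> Cbd opn av g -> phi (fun x => f x * g x) = phi f * phi g) ->
     (forall (a : k) f, Cbd opn av f -> phi (fun x => a * f x) = a *: phi f) ->
     phi (fun _ => 1) = 1 ->
     (forall f g, Cbd opn av f -> Cbd opn av g -> phi f = phi g -> f = g) ->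
     closed_in_normed nA (fun y => exists f, Cbd opn av f /\ phi f = y) ->
     (* phi is continuous for the sup norm on C_bd(X,k) *)
     forall f, Cbd opn av f -> forall eps, Rlt R0 eps ->
       exists delta, Rlt R0 delta /\
         forall g, Cbd opn av g -> supnorm_le av (fun x => f x - g x) delta ->
           Rle (nA (phi f - phi g)) eps)
  /\
  (* the particular case A = B_k(V) *)
  (forall (V : lmodType k) (nV : V -> R) (rho : (X -> k) -> V -> V),
     banach_space_norm av nV ->
     (forall f, Cbd opn av f -> bounded_op nV (rho f)) ->
     (forall f g, Cbd opn av f -> Cbd opn av g ->
        rho (fun x => f x + g x) = (fun v => rho f v + rho g v)) ->
     (forall f g, Cbd opn av f -> Cbd opn av g ->
        rho (fun x => f x * g x) = (fun v => rho f (rho g v))) ->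
     (forall (a : k) f, Cbd opn av f -> rho (fun x => a * f x) = (fun v => a *: rho f v)) ->
     rho (fun _ => 1) = (fun v => v) ->
     (forall f g, Cbd opn av f -> Cbd opn av g -> rho f = rho g -> f = g) ->
     (* image closed in B_k(V) for the operator norm *)
     (forall T, bounded_op nV T -> ~ (exists f, Cbd opn av f /\ rho f = T) ->
        exists r, Rlt R0 r /\ forall S, bounded_op nV S ->
          opnorm_lt nV (fun v => S v - T v) r -> ~ (exists f, Cbd opn av f /\ rho f = S)) ->
     (* rho is bounded: ||rho f|| <= C ||f||_sup *)
     exists C, forall f, Cbd opn av f -> forall r, supnorm_le av f r ->
       opnorm_le nV (rho f) (Rmult C r)).
Proof.
split.
- move=> A nA phi hA phiD phiM phiZ _ phiI hcl.
  exact: (injective_hom_continuous hk hX hA phiD phiM phiZ phiI hcl).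
- move=> V nV rho hV hbd rhoD rhoM rhoZ rho1 rhoI hcl.
  exact: (bounded_representation hk hX hV hbd rhoD rhoM rhoZ rho1 rhoI hcl).
Qed.
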